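(* Let $n\geq 0$, $N\geq n$ and $k\geq 1$ be integers with $N+2>2(n+1)k$. Let $x_j=\cos\!\big((N+1-j)\pi/(N+2)\big)$ for $0\leq j\leq N$, let $D=\sqrt{2/(N+2)}\,\operatorname{diag}\!\big(\sqrt{1-x_0^2},\ldots,\sqrt{1-x_N^2}\big)$, and let $V\in\mathbb{R}^{(N+1)\times(N-n)}$ be the matrix $V=D\,W$ where $W_{i,j}=U_{n+1+j}(x_i)$ for $0\leq i\leq N$, $0\leq j\leq N-n-1$, with $U_\ell$ the Chebyshev polynomial of the second kind of degree $\ell$. Then $V^\top$ satisfies the restricted isometry property of order $k$ with constant $\delta_k=2(n+1)k/(N+2)$, i.e. \[ (1-\delta_k)\|\underline{z}\|_2^2\leq\|V^\top\underline{z}\|_2^2\leq(1+\delta_k)\|\underline{z}\|_2^2 \] for every $\underline{z}\in\mathbb{C}^{N+1}$ with at most $k$ nonzero entries.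
   Context: $U_\ell$ is the Chebyshev polynomial of the second kind of degree $\ell$, $U_\ell(\cos\theta)=\sin((\ell+1)\theta)/\sin\theta$. $\|\cdot\|_2$ is the Euclidean norm. Note that the hypothesis gives $0<\delta_k<1$. *)

From mathcomp Require Import all_boot all_order all_algebra.
From mathcomp Require Import all_classical all_reals all_analysis.
From mathcomp Require Export complex.
Set Implicit Arguments. Unset Strict Implicit. Unset Printing Implicit Defensive.
Import Order.TTheory GRing.Theory Num.Theory.
Local Open Scope ring_scope.

Section Defs.
Variable R : realType.

Fixpoint chebU (l : nat) (x : R) : R :=
  match l with
  | 0 => 1
  | 1 => 2 * x
  | (l'.+1 as m).+1 => 2 * x * chebU m x - chebU l' x
  end.

Definition cheb_node (N j : nat) : R :=
  cos ((N.+1 - j)%:R * pi / (N.+2)%:R).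

Definition Dmat (N : nat) : 'M[R]_N.+1 :=
  \matrix_(i, j) (if i == j then
     Num.sqrt (2 / (N.+2)%:R) * Num.sqrt (1 - cheb_node N i ^+ 2) else 0).

Definition Wmat (N n : nat) : 'M[R]_(N.+1, N - n) :=
  \matrix_(i, j) chebU (n.+1 + j) (cheb_node N i).

Definition Vmat (N n : nat) : 'M[R]_(N.+1, N - n) := Dmat N *m Wmat N n.

Definition csq (c : R[i]) : R := (complex.Re c) ^+ 2 + (complex.Im c) ^+ 2.

Definition sqnorm m (z : 'cV[R[i]]_m) : R := \sum_(i < m) csq (z i 0).

Definition supp_size m (z : 'cV[R[i]]_m) : nat := #|[set i | z i 0 != 0]|.

Definition cmx m p (A : 'M[R]_(m, p)) : 'M[R[i]]_(m, p) := map_mx (fun r => (r%:C)%C) A.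

End Defs.

Arguments chebU {R}.
Arguments cheb_node {R}.
Arguments Dmat {R}.
Arguments Wmat {R}.
Arguments Vmat {R}.

From mathcomp Require Import all_boot all_order all_algebra.
From mathcomp Require Import all_classical all_reals all_analysis.
From mathcomp Require Import complex ring lra zify.
Set Implicit Arguments. Unset Strict Implicit. Unset Printing Implicit Defensive.
Import Order.TTheory GRing.Theory Num.Theory.
Local Open Scope ring_scope.

(** Write [x_i = cos t_i] with [t_i = (N+1-i) pi / (N+2)] in [[0, pi]].  Then
    [sqrt (1 - x_i^2) = sin t_i] and [sin t * U_l (cos t) = sin ((l+1) t)], so [V]
    consists of the last [N - n] columns of the orthogonal DST-I matrix
    [S_(i,l) = sqrt (2/(N+2)) sin ((l+1) t_i)].  For a real vector [a] this gives
    [|V^T a|^2 = |a|^2 - sum_(l <= n) (S^T a)_l^2]; as [S_(i,l)^2 <= 2/(N+2)],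
    Cauchy-Schwarz over the at most [k] nonzero entries of [a] bounds each of the
    [n+1] removed terms by [2k/(N+2) |a|^2].  A complex vector is handled through
    its real and imaginary parts, and the upper bound even holds with constant 1. *)

Lemma sqr_sum_le_card (R : realDomainType) (I : finType) (A : {set I}) (c : I -> R) :
  (\sum_(i in A) c i) ^+ 2 <= #|A|%:R * \sum_(i in A) c i ^+ 2.
Proof.
set S := \sum_(i in A) c i; set S2 := \sum_(i in A) c i ^+ 2.
have lagrange : \sum_(i in A) \sum_(j in A) (c i - c j) ^+ 2 = 2 * (#|A|%:R * S2 - S ^+ 2).
  transitivity (\sum_(i in A) (#|A|%:R * c i ^+ 2 + S2 - 2 * c i * S)).
    apply: eq_bigr => i _.
    rewrite (eq_bigr (fun j => c i ^+ 2 + c j ^+ 2 - 2 * c i * c j)); last by move=> j _; ring.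
    by rewrite !big_split /= sumr_const sumrN -mulr_sumr -/S -/S2 -mulr_natl; ring.
  rewrite !big_split /= sumrN -mulr_sumr -mulr_suml sumr_const -mulr_natl /S /S2.
  by rewrite -mulr_sumr -/S -/S2 -mulr_natr; ring.
have : 0 <= 2 * (#|A|%:R * S2 - S ^+ 2).
  by rewrite -lagrange; do 2!(apply: sumr_ge0 => ? _); exact: sqr_ge0.
by rewrite pmulr_rge0 // subr_ge0.
Qed.

Lemma big_ord_split_at (V : nmodType) (N m : nat) (F : nat -> V) : (m <= N)%N ->
  \sum_(l < N) F l = \sum_(l < m) F l + \sum_(j < N - m) F (m + j)%N.
Proof.
move=> mN; rewrite -(big_mkord xpredT F) (big_cat_nat (leq0n m)) //= big_mkord.
congr (_ + _); rewrite -{1}[m]add0n big_addn big_mkord.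
by apply: eq_bigr => j _; rewrite addnC.
Qed.

Section Trigonometry.
Variable R : realType.

Lemma sin_natrMpi c : sin (c%:R * pi) = 0 :> R.
Proof.
elim: c => [|c IH]; first by rewrite mul0r sin0.
by rewrite -addn1 natrD mulrDl mul1r sinDpi IH oppr0.
Qed.

Lemma cos_natrMpi c : cos (c%:R * pi) = (-1) ^+ c :> R.
Proof.
elim: c => [|c IH]; first by rewrite mul0r cos0.
by rewrite -addn1 natrD mulrDl mul1r cosDpi IH exprD expr1 mulrN1.
Qed.

(* Product to sum: [2 sin h cos (2 j h) = sin ((2 j + 1) h) - sin ((2 j - 1) h)] telescopes. *)
Lemma sin_mulr_sum_cos M (h : R) :
  2 * sin h * \sum_(j < M) cos (j%:R * (2 * h)) = sin ((2 * M%:R - 1) * h) + sin h.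
Proof.
pose f (j : nat) := sin ((2 * j%:R - 1) * h).
have step j : 2 * sin h * cos (j%:R * (2 * h)) = f j.+1 - f j.
  rewrite /f.
  have -> : (2 * j.+1%:R - 1) * h = j%:R * (2 * h) + h by rewrite -addn1 natrD; ring.
  have -> : (2 * j%:R - 1) * h = j%:R * (2 * h) - h by ring.
  by rewrite sinD sinB; ring.
rewrite mulr_sumr (eq_bigr (fun j : 'I_M => f j.+1 - f j)) => [|j _]; last exact: step.
rewrite -(big_mkord xpredT (fun j => f j.+1 - f j)) telescope_sumr // /f.
by rewrite mulr0 sub0r mulN1r sinN opprK.
Qed.

Lemma sum_cos_natrMpi M c : (0 < c < 2 * M)%N ->
  \sum_(j < M) cos (j%:R * (c%:R * pi / M%:R)) = (1 - (-1) ^+ c) / 2 :> R.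
Proof.
case/andP=> c_gt0 c_lt.
have M_gt0 : (0 < M)%N by lia.
set h : R := c%:R * pi / (2 * M%:R).
have sinh_gt0 : 0 < sin h.
  apply: sin_gt0_pi; apply/andP; split.
    by rewrite /h divr_gt0 ?mulr_gt0 ?ltr0n ?pi_gt0.
  rewrite /h ltr_pdivrMr ?mulr_gt0 ?ltr0n // mulrC ltr_pM2l ?pi_gt0 //.
  by rewrite -natrM ltr_nat.
have := sin_mulr_sum_cos M h.
have -> : 2 * h = c%:R * pi / M%:R by rewrite /h; field; rewrite pnatr_eq0 -lt0n.
have -> : (2 * M%:R - 1) * h = c%:R * pi - h by rewrite /h; field; rewrite pnatr_eq0 -lt0n.
rewrite sinB sin_natrMpi cos_natrMpi => sum_eq.
apply: (@mulfI _ (2 * sin h)); first by rewrite mulf_neq0 // gt_eqF.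
by rewrite sum_eq; field.
Qed.

Lemma sum_sin_mul_sin M a b : (0 < a < M)%N -> (0 < b < M)%N ->
  \sum_(l < M) sin (l%:R * (a%:R * pi / M%:R)) * sin (l%:R * (b%:R * pi / M%:R))
  = if a == b then M%:R / 2 else 0 :> R.
Proof.
wlog le_ba : a b / (b <= a)%N => [sym Ha Hb|].
  have [le_ba|lt_ab] := leqP b a; first exact: sym.
  rewrite eq_sym -sym ?(ltnW lt_ab) //.
  by apply: eq_bigr => l _; rewrite mulrC.
move=> /andP[a_gt0 a_lt] /andP[b_gt0 b_lt].
pose C d : R := \sum_(l < M) cos (l%:R * (d%:R * pi / M%:R)).
have prod_to_sum (l : 'I_M) :
    sin (l%:R * (a%:R * pi / M%:R)) * sin (l%:R * (b%:R * pi / M%:R))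
    = (cos (l%:R * ((a - b)%N%:R * pi / M%:R))
       - cos (l%:R * ((a + b)%N%:R * pi / M%:R))) / 2 :> R.
  rewrite natrB // natrD.
  set x := l%:R * (a%:R * pi / M%:R); set y := l%:R * (b%:R * pi / M%:R).
  have -> : l%:R * ((a%:R - b%:R) * pi / M%:R) = x - y by rewrite /x /y; ring.
  have -> : l%:R * ((a%:R + b%:R) * pi / M%:R) = x + y by rewrite /x /y; ring.
  by rewrite cosB cosD; field.
rewrite (eq_bigr _ (fun l _ => prod_to_sum l)) -mulr_suml sumrB -/(C _) -/(C _).
rewrite [C (a + b)%N]sum_cos_natrMpi; last lia.
have -> : (-1) ^+ (a + b) = (-1) ^+ (a - b) :> R.
  have -> : (a + b = (a - b) + 2 * b)%N by lia.
  by rewrite exprD exprM sqrrN expr1n expr1n mulr1.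
case: eqP => [<-|ne_ab].
  rewrite subnn /C (eq_bigr (fun _ => 1)) => [|l _]; last by rewrite !mul0r mulr0 cos0.
  by rewrite sumr_const card_ord expr0 subrr mul0r subr0.
by rewrite /C sum_cos_natrMpi ?subrr ?mul0r //; lia.
Qed.

Lemma sin_mulr_chebU (t : R) l : sin t * chebU l (cos t) = sin (l.+1%:R * t).
Proof.
suff : sin t * chebU l (cos t) = sin (l.+1%:R * t)
    /\ sin t * chebU l.+1 (cos t) = sin (l.+2%:R * t) by case.
elim: l => [|l [IH1 IH2]].
  have -> : 2%:R * t = t + t :> R by ring.
  by rewrite /= mulr1 mul1r sinD; split=> //; ring.
split=> //; rewrite [chebU l.+2 _]/= mulrBr IH1.
have -> : sin t * (2 * cos t * chebU l.+1 (cos t))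
    = 2 * cos t * (sin t * chebU l.+1 (cos t)) by ring.
have -> : l.+3%:R * t = l.+2%:R * t + t :> R by rewrite -[l.+3]addn1 natrD; ring.
have -> : l.+1%:R * t = l.+2%:R * t - t :> R by rewrite -[l.+2]addn1 natrD; ring.
by rewrite IH2 sinB sinD; ring.
Qed.

End Trigonometry.

Section ChebyshevMatrix.
Variable R : realType.

Definition cheb_angle (N i : nat) : R := (N.+1 - i)%:R * pi / (N.+2)%:R.

Definition dst (N i l : nat) : R :=
  Num.sqrt (2 / (N.+2)%:R) * sin (l.+1%:R * cheb_angle N i).

Lemma dst_orthogonal N (i m : 'I_N.+1) :
  \sum_(l < N.+1) dst N i l * dst N m l = (i == m)%:R.
Proof.
have sqrt_sqr : Num.sqrt (2 / (N.+2)%:R) ^+ 2 = 2 / (N.+2)%:R :> R.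
  by rewrite sqr_sqrtr // divr_ge0 // ler0n.
rewrite (eq_bigr (fun l : 'I_N.+1 => 2 / (N.+2)%:R *
    (sin (l.+1%:R * cheb_angle N i) * sin (l.+1%:R * cheb_angle N m)))); last first.
  by move=> l _; rewrite /dst mulrACA -expr2 sqrt_sqr.
rewrite -mulr_sumr; have lt_i := ltn_ord i; have lt_m := ltn_ord m.
have := @sum_sin_mul_sin R N.+2 (N.+1 - i) (N.+1 - m).
rewrite big_ord_recl /= !mul0r sin0 mul0r add0r => ->; try (apply/andP; split; lia).
have -> : ((N.+1 - i)%N == (N.+1 - m)%N) = (i == m).
  by apply/eqP/eqP => [eq_im|->] //; apply: val_inj => /=; lia.
case: eqP => _; last by rewrite mulr0.
by rewrite /= mulrA divfK ?divff ?pnatr_eq0.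
Qed.

Lemma dst_parseval N (a : 'I_N.+1 -> R) :
  \sum_(l < N.+1) (\sum_(i < N.+1) dst N i l * a i) ^+ 2 = \sum_(i < N.+1) a i ^+ 2.
Proof.
under eq_bigr do rewrite expr2 mulr_suml.
under eq_bigr do under eq_bigr do rewrite mulr_sumr.
rewrite exchange_big /=; apply: eq_bigr => i _.
rewrite exchange_big /= (bigD1 i) //= [X in _ + X]big1 => [|m ne_mi].
  rewrite addr0 (eq_bigr (fun l : 'I_N.+1 => dst N i l * dst N i l * (a i * a i)))
    => [|l _]; last by ring.
  by rewrite -mulr_suml dst_orthogonal eqxx mul1r expr2.
rewrite (eq_bigr (fun l : 'I_N.+1 => dst N i l * dst N m l * (a i * a m)))
  => [|l _]; last by ring.
by rewrite -mulr_suml dst_orthogonal eq_sym (negbTE ne_mi) mul0r.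
Qed.

Lemma sqr_dst_le N i l : dst N i l ^+ 2 <= 2 / (N.+2)%:R.
Proof.
rewrite /dst exprMn sqr_sqrtr ?divr_ge0 ?ler0n //.
by rewrite ler_piMr ?divr_ge0 ?ler0n // sin2cos2 lerBlDr lerDl sqr_ge0.
Qed.

Lemma Vmat_dst N n (i : 'I_N.+1) (j : 'I_(N - n)) : Vmat N n i j = dst N i (n.+1 + j).
Proof.
rewrite /Vmat mxE (bigD1 i) //= big1 => [|m ne_mi]; last first.
  by rewrite /Dmat !mxE eq_sym (negbTE ne_mi) mul0r.
rewrite addr0 /Dmat /Wmat !mxE eqxx /cheb_node -/(cheb_angle N i).
have angle_ge0 : 0 <= cheb_angle N i by rewrite divr_ge0 ?mulr_ge0 ?ler0n ?pi_ge0.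
have angle_le_pi : cheb_angle N i <= pi.
  rewrite ler_pdivrMr ?ltr0n // mulrC ler_pM2l ?pi_gt0 // ler_nat; lia.
rewrite -sin2cos2 sqrtr_sqr ger0_norm; last by rewrite sin_ge0_pi ?angle_ge0.
by rewrite -mulrA sin_mulr_chebU.
Qed.

Definition trmul_sqnorm {m p} (A : 'M[R]_(m, p)) (a : 'I_m -> R) : R :=
  \sum_(j < p) (\sum_(i < m) A i j * a i) ^+ 2.

Lemma trmul_sqnorm_Vmat N n (a : 'I_N.+1 -> R) : (n <= N)%N ->
  trmul_sqnorm (Vmat N n) a = \sum_(i < N.+1) a i ^+ 2
    - \sum_(l < n.+1) (\sum_(i < N.+1) dst N i l * a i) ^+ 2.
Proof.
move=> le_nN; rewrite -dst_parseval (@big_ord_split_at _ N.+1 n.+1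
  (fun l => (\sum_(i < N.+1) dst N i l * a i) ^+ 2) le_nN) addrC addKr.
by apply: eq_bigr => j _; under eq_bigr do rewrite Vmat_dst.
Qed.

Lemma sqr_dst_coef_le N (A : {set 'I_N.+1}) (a : 'I_N.+1 -> R) l :
  (forall i, i \notin A -> a i = 0) ->
  (\sum_(i < N.+1) dst N i l * a i) ^+ 2
    <= #|A|%:R * (2 / (N.+2)%:R) * \sum_(i < N.+1) a i ^+ 2.
Proof.
move=> a_supp.
have sum_in_A (F : 'I_N.+1 -> R) :
    (forall i, i \notin A -> F i = 0) -> \sum_(i < N.+1) F i = \sum_(i in A) F i.
  by move=> F_supp; rewrite [RHS]big_rmcond.
rewrite sum_in_A => [|i /a_supp ->]; last by rewrite mulr0.
apply: le_trans (sqr_sum_le_card A (fun i => dst N i l * a i)) _.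
rewrite -mulrA ler_wpM2l ?ler0n // (sum_in_A (fun i => a i ^+ 2)) => [|i /a_supp ->];
  last by rewrite expr0n.
rewrite mulr_sumr; apply: ler_sum => i _.
by rewrite exprMn ler_wpM2r ?sqr_ge0 ?sqr_dst_le.
Qed.

Lemma trmul_sqnorm_Vmat_bounds N n k (A : {set 'I_N.+1}) (a : 'I_N.+1 -> R) :
  (n <= N)%N -> (forall i, i \notin A -> a i = 0) -> (#|A| <= k)%N ->
  (1 - (2 * n.+1 * k)%:R / (N.+2)%:R) * \sum_(i < N.+1) a i ^+ 2
    <= trmul_sqnorm (Vmat N n) a
  /\ trmul_sqnorm (Vmat N n) a <= \sum_(i < N.+1) a i ^+ 2.
Proof.
move=> le_nN a_supp card_A; rewrite trmul_sqnorm_Vmat //.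
set S := \sum_(i < N.+1) a i ^+ 2; set L := \sum_(l < n.+1) _.
have S_ge0 : 0 <= S by apply: sumr_ge0 => i _; exact: sqr_ge0.
have L_ge0 : 0 <= L by apply: sumr_ge0 => l _; exact: sqr_ge0.
have L_le : L <= (2 * n.+1 * k)%:R / (N.+2)%:R * S.
  apply: (le_trans (y := \sum_(l < n.+1) #|A|%:R * (2 / (N.+2)%:R) * S)).
    by apply: ler_sum => l _; exact: sqr_dst_coef_le.
  rewrite sumr_const card_ord.
  have -> : #|A|%:R * (2 / (N.+2)%:R) * S *+ n.+1
      = (2 * n.+1 * #|A|)%:R / (N.+2)%:R * S by rewrite !natrM -mulr_natl; ring.
  by rewrite ler_wpM2r // ler_wpM2r ?invr_ge0 ?ler0n // ler_nat leq_mul2l card_A orbT.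
by rewrite mulrBl mul1r lerD2l lerN2 gerBl.
Qed.

Lemma sqnormE m (z : 'cV[R[i]]_m) :
  sqnorm z = \sum_(i < m) complex.Re (z i 0) ^+ 2 + \sum_(i < m) complex.Im (z i 0) ^+ 2.
Proof. by rewrite /sqnorm /csq big_split. Qed.

Lemma sqnorm_cmx_tr_mul m p (A : 'M[R]_(m, p)) (z : 'cV[R[i]]_m) :
  sqnorm ((cmx A)^T *m z)
  = trmul_sqnorm A (fun i => complex.Re (z i 0))
    + trmul_sqnorm A (fun i => complex.Im (z i 0)).
Proof.
rewrite /sqnorm /trmul_sqnorm -big_split; apply: eq_bigr => j _.
rewrite /csq mxE (raddf_sum (@complex.Re R : Rcomplex R -> R)).
rewrite (raddf_sum (@complex.Im R : Rcomplex R -> R)).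
congr (_ ^+ 2 + _ ^+ 2); apply: eq_bigr => i _;
  by rewrite !mxE; case: (z i 0) => x y /=; ring.
Qed.

End ChebyshevMatrix.

Theorem proposition2p2 (R : realType) (n N k : nat)
  (hnN : (n <= N)%N) (hk : (1 <= k)%N) (hNk : (2 * n.+1 * k < N.+2)%N) :
  let delta : R := (2 * n.+1 * k)%:R / (N.+2)%:R in
  forall z : 'cV[R[i]]_N.+1, (supp_size z <= k)%N ->
    (1 - delta) * sqnorm z <= sqnorm ((cmx (Vmat N n))^T *m z) /\
    sqnorm ((cmx (Vmat N n))^T *m z) <= (1 + delta) * sqnorm z.
Proof.
(* [hk] and [hNk] only make [0 < delta < 1]; the inequalities do not need them. *)
move=> delta z supp_z; set A := [set i | z i 0 != 0].
have Re_supp i : i \notin A -> complex.Re (z i 0) = 0.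
  by rewrite inE negbK => /eqP ->.
have Im_supp i : i \notin A -> complex.Im (z i 0) = 0.
  by rewrite inE negbK => /eqP ->.
have [Re_lo Re_hi] := trmul_sqnorm_Vmat_bounds hnN Re_supp supp_z.
have [Im_lo Im_hi] := trmul_sqnorm_Vmat_bounds hnN Im_supp supp_z.
have delta_ge0 : 0 <= delta by rewrite divr_ge0 ?ler0n.
have Re_ge0 : 0 <= \sum_(i < N.+1) complex.Re (z i 0) ^+ 2.
  by apply: sumr_ge0 => i _; exact: sqr_ge0.
have Im_ge0 : 0 <= \sum_(i < N.+1) complex.Im (z i 0) ^+ 2.
  by apply: sumr_ge0 => i _; exact: sqr_ge0.
rewrite -/delta in Re_lo Im_lo.
rewrite sqnorm_cmx_tr_mul sqnormE; split; nra.
Qed.
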